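(* Let $m,n\geq 2$ be two distinct integers and $k\geq 2$. Then $$\Phi_k (P_m \square P_n)=\frac{1}{4}\left( k^{mn}-k^{m\lceil \frac{n}{2}\rceil}-k^{n\lceil \frac{m}{2}\rceil} -k^{\lceil \frac{mn}{2}\rceil} +2 k^{\lceil \frac{m}{2}\rceil\lceil \frac{n}{2}\rceil}\right).$$
   Context: $P_n$ is the path on $n$ vertices and $\square$ is the Cartesian product ($V(G\square H)=V(G)\times V(H)$, $(g,h)\sim(g',h')$ iff $g=g'$ and $hh'\in E(H)$, or $gg'\in E(G)$ and $h=h'$). A vertex coloring is distinguishing if the identity is the only automorphism preserving it. Two colorings $c_1,c_2$ of a graph $G$ are equivalent if there is an automorphism $\alpha$ of $G$ with $c_1(v)=c_2(\alpha(v))$ for all $v\in V(G)$. $\Phi_k(G)$ denotes the number of non-equivalent distinguishing vertex colorings of $G$ with colors from $\{1,\ldots,k\}$ (not all colors need be used). *)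

From HB Require Import structures.
From mathcomp Require Import all_boot all_order all_algebra all_fingroup.
Set Implicit Arguments. Unset Strict Implicit. Unset Printing Implicit Defensive.

Definition path_adj (n : nat) : rel 'I_n :=
  fun i j => (i.+1 == j :> nat) || (j.+1 == i :> nat).

Definition cart_adj (V W : finType) (eG : rel V) (eH : rel W) : rel (V * W) :=
  fun x y => ((x.1 == y.1) && eH x.2 y.2) || (eG x.1 y.1 && (x.2 == y.2)).

Definition grid_adj (m n : nat) : rel ('I_m * 'I_n) :=
  cart_adj (@path_adj m) (@path_adj n).

Definition is_aut (V : finType) (e : rel V) (s : {perm V}) : bool :=
  [forall x, forall y, e (s x) (s y) == e x y].

(* Colorings with colors from {1,..,k}, represented as 'I_k. *)
Definition coloring (V : finType) (k : nat) := {ffun V -> 'I_k}.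

Definition distinguishing (V : finType) (e : rel V) (k : nat) (c : coloring V k) : bool :=
  [forall s : {perm V}, (is_aut e s && [forall v, c (s v) == c v]) ==> (s == 1%g)].

Definition equiv_col (V : finType) (e : rel V) (k : nat) (c1 c2 : coloring V k) : bool :=
  [exists a : {perm V}, is_aut e a && [forall v, c1 v == c2 (a v)]].

Definition Phi (V : finType) (e : rel V) (k : nat) : nat :=
  #|[set [set c2 : coloring V k | equiv_col e c1 c2]
     | c1 in [set c : coloring V k | distinguishing e c]]|.

Definition ceil2 (n : nat) : nat := (n + 1) %/ 2.

(* For m <> n the automorphisms of P_m □ P_n are the four symmetries of the
   rectangle, a Klein group K: an automorphism preserves the L1 distance, so it
   permutes the corners, and an isometry fixing two adjacent corners is the
   identity.  A coloring is thus
   distinguishing iff no non-identity element of K fixes it, and then its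
   equivalence class has exactly four members, so 4 Phi_k counts the
   distinguishing colorings.  Any two non-identity elements of K generate K, so
   inclusion-exclusion over the three of them only involves the colorings fixed
   by one element and those fixed by all of K; each such number is k to the
   number of orbits of the corresponding subgroup. *)

From mathcomp Require Import all_boot all_order all_algebra all_fingroup.
From mathcomp Require Import zify lra.

Import GRing.Theory.

Lemma is_autP {V : finType} {e : rel V} {s : {perm V}} :
  reflect (forall x y, e (s x) (s y) = e x y) (is_aut e s).
Proof.
apply: (iffP forallP) => [aut_s x y|aut_s x]; first exact/eqP/(forallP (aut_s x)).
by apply/forallP => y; rewrite aut_s.
Qed.

Lemma is_autV {V : finType} {e : rel V} {s : {perm V}} :
  is_aut e s -> is_aut e s^-1.
Proof. by move/is_autP=> aut_s; apply/is_autP => x y; rewrite -aut_s !permKV. Qed.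

Definition rev_if (b : bool) {N} (i : 'I_N) : 'I_N := if b then rev_ord i else i.

Lemma rev_ifK b N : involutive (@rev_if b N).
Proof. by case: b => // i; rewrite /rev_if rev_ordK. Qed.

Lemma val_rev_if b N (i : 'I_N) : val (rev_if b i) = if b then N - i.+1 else i.
Proof. by case: b. Qed.

Lemma path_adj_rev_if b N (i j : 'I_N) :
  path_adj (rev_if b i) (rev_if b j) = path_adj i j.
Proof.
case: b => //; rewrite /path_adj /=.
have := ltn_ord i; have := ltn_ord j => lt_j lt_i.
by apply/orP/orP => -[] /eqP ij; [right|left|right|left]; apply/eqP; lia.
Qed.

(* The Klein group, as the additive group of [bool * bool]; [h.1] and [h.2]
   tell which axes [h] reverses. *)
Notation klein := (bool * bool)%type.

Definition grid_flip {m n} (h : klein) (x : 'I_m * 'I_n) : 'I_m * 'I_n :=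
  (rev_if h.1 x.1, rev_if h.2 x.2).

Section GridFlips.
Context {m n : nat}.
Notation V := ('I_m * 'I_n)%type.
Notation e := (@grid_adj m n).

Lemma grid_flipK h : involutive (@grid_flip m n h).
Proof. by case=> i j; rewrite /grid_flip /= !rev_ifK. Qed.

Lemma grid_flip_inj h : injective (@grid_flip m n h).
Proof. exact: inv_inj (grid_flipK h). Qed.

Lemma grid_flip0 (x : V) : grid_flip 0%R x = x.
Proof. by case: x. Qed.

Lemma grid_flipD h h' (x : V) :
  grid_flip (h + h')%R x = grid_flip h (grid_flip h' x).
Proof.
case: h h' x => [a b] [a' b'] [i j].
by case: a a' b b' => [] [] [] []; rewrite /grid_flip /rev_if /= ?rev_ordK.
Qed.

Lemma grid_flipC h h' (x : V) :
  grid_flip h (grid_flip h' x) = grid_flip h' (grid_flip h x).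
Proof. by rewrite -!grid_flipD addrC. Qed.

Lemma grid_adj_flip h (x y : V) : e (grid_flip h x) (grid_flip h y) = e x y.
Proof.
rewrite /grid_adj /cart_adj /= !path_adj_rev_if.
by rewrite !(inj_eq (inv_inj (rev_ifK _ _))).
Qed.

Definition flip_perm h : {perm V} := perm (grid_flip_inj h).

Lemma flip_permE h x : flip_perm h x = grid_flip h x.
Proof. exact: permE. Qed.

Lemma is_aut_flip h : is_aut e (flip_perm h).
Proof. by apply/is_autP => x y; rewrite !flip_permE grid_adj_flip. Qed.

End GridFlips.

Definition grid_dist {m n} (x y : 'I_m * 'I_n) : nat :=
  `|x.1 - y.1| + `|x.2 - y.2|.

Section GridDistance.
Context {m n : nat}.
Notation V := ('I_m * 'I_n)%type.
Notation e := (@grid_adj m n).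

Lemma grid_dist_adj (x : V) {y z : V} : e y z -> grid_dist x y <= (grid_dist x z).+1.
Proof.
case: x y z => [x1 x2] [y1 y2] [z1 z2]; rewrite /grid_adj /cart_adj /path_adj /grid_dist /=.
by case/orP => /andP [] => [/eqP-> | + /eqP->] => /orP [] /eqP; lia.
Qed.

Lemma grid_dist_eq0 (x y : V) : grid_dist x y = 0 -> x = y.
Proof.
case: x y => [x1 x2] [y1 y2]; rewrite /grid_dist /= => d0.
by congr pair; apply: val_inj => /=; lia.
Qed.

Lemma grid_dist_step {x y : V} :
  0 < grid_dist x y -> exists2 z, e y z & grid_dist x z = (grid_dist x y).-1.
Proof.
case: x y => [x1 x2] [y1 y2]; rewrite /grid_dist /= => d_gt0.
have := ltn_ord x1; have := ltn_ord x2; have := ltn_ord y1; have := ltn_ord y2.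
move=> lt_y2 lt_y1 lt_x2 lt_x1.
have [lt_y1x1 | lt_x1y1 | eq_y1x1] := ltngtP y1 x1.
- have lt_z1 : y1.+1 < m by lia.
  exists (Ordinal lt_z1, y2); rewrite /grid_adj /cart_adj /path_adj /= ?eqxx ?orbT //; lia.
- have lt_z1 : y1.-1 < m by lia.
  exists (Ordinal lt_z1, y2); rewrite /grid_adj /cart_adj /path_adj /= ?eqxx /=; lia.
have [lt_y2x2 | lt_x2y2 | eq_y2x2] := ltngtP y2 x2.
- have lt_z2 : y2.+1 < n by lia.
  exists (y1, Ordinal lt_z2); rewrite /grid_adj /cart_adj /path_adj /= ?eqxx //; lia.
- have lt_z2 : y2.-1 < n by lia.
  exists (y1, Ordinal lt_z2); rewrite /grid_adj /cart_adj /path_adj /= ?eqxx /=; lia.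
lia.
Qed.

Lemma aut_grid_dist_le {s : {perm V}} x y :
  is_aut e s -> grid_dist (s x) (s y) <= grid_dist x y.
Proof.
move/is_autP=> aut_s.
suff: forall d y, grid_dist x y <= d -> grid_dist (s x) (s y) <= d by apply.
elim=> [|d IHd] {}y le_xy_d.
  have -> : y = x by apply/esym/grid_dist_eq0; lia.
  by rewrite /grid_dist; lia.
have [/grid_dist_eq0<-|d_gt0] := posnP (grid_dist x y); first by rewrite /grid_dist; lia.
have [z yz dz] := grid_dist_step d_gt0.
apply: leq_trans (grid_dist_adj (s x) (etrans (aut_s y z) yz)) _.
by rewrite ltnS IHd //; lia.
Qed.

Lemma aut_grid_dist {s : {perm V}} x y :
  is_aut e s -> grid_dist (s x) (s y) = grid_dist x y.
Proof.
move=> aut_s; apply/eqP; rewrite eqn_leq aut_grid_dist_le //=.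
by have := aut_grid_dist_le (s x) (s y) (is_autV aut_s); rewrite !permK.
Qed.

Lemma grid_dist_flip h (x y : V) :
  grid_dist (grid_flip h x) (grid_flip h y) = grid_dist x y.
Proof.
case: x y => [x1 x2] [y1 y2]; rewrite /grid_dist /= !val_rev_if.
have := ltn_ord x1; have := ltn_ord x2; have := ltn_ord y1; have := ltn_ord y2.
by case: h.1; case: h.2; lia.
Qed.

End GridDistance.

Definition grid_isometry {m n} (f : 'I_m * 'I_n -> 'I_m * 'I_n) :=
  forall x y, grid_dist (f x) (f y) = grid_dist x y.

Section GridIsometries.
Context {m n : nat}.
Hypotheses (m_gt1 : 1 < m) (n_gt1 : 1 < n).
Notation V := ('I_m * 'I_n)%type.

Let origin : V := (Ordinal (ltnW m_gt1), Ordinal (ltnW n_gt1)).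
Let corner10 : V := grid_flip (true, false) origin.

Lemma grid_isometry_comp {f g : V -> V} :
  grid_isometry f -> grid_isometry g -> grid_isometry (f \o g).
Proof. by move=> iso_f iso_g x y; rewrite /= iso_f iso_g. Qed.

Lemma grid_isometry_flip h : grid_isometry (@grid_flip m n h).
Proof. exact: grid_dist_flip. Qed.

Lemma grid_dist_origin_flip h :
  grid_dist origin (grid_flip h origin) = h.1 * m.-1 + h.2 * n.-1.
Proof. by case: h => [[] []]; rewrite /grid_dist /=; lia. Qed.

Lemma grid_diameter_corner (x y : V) :
  grid_dist x y = m.-1 + n.-1 -> exists h, x = grid_flip h origin.
Proof.
case: x y => [x1 x2] [y1 y2]; rewrite /grid_dist /= => diam.
have := ltn_ord x1; have := ltn_ord x2; have := ltn_ord y1; have := ltn_ord y2.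
exists (0 < x1, 0 < x2); congr pair; apply: val_inj; rewrite val_rev_if /=.
  by case: (posnP x1) => /=; lia.
by case: (posnP x2) => /=; lia.
Qed.

Lemma isometry_origin_corner {f : V -> V} :
  grid_isometry f -> exists h, f origin = grid_flip h origin.
Proof.
move=> iso_f; apply: (@grid_diameter_corner _ (f (grid_flip (true, true) origin))).
by rewrite iso_f grid_dist_origin_flip /=; lia.
Qed.

Lemma grid_flip_id h : (forall x : V, grid_flip h x = x) -> h = 0%R.
Proof.
move=> h_id; have := grid_dist_origin_flip h; rewrite {}h_id /grid_dist.
by case: h => [[] []] //=; lia.
Qed.

Lemma grid_eq_dist (x y : V) : grid_dist origin x = grid_dist origin y ->
  grid_dist corner10 x = grid_dist corner10 y -> x = y.
Proof.
case: x y => [x1 x2] [y1 y2]; rewrite /grid_dist /=.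
have := ltn_ord x1; have := ltn_ord y1.
by move=> *; congr pair; apply: val_inj => /=; lia.
Qed.

Section NonSquare.
Hypothesis m_neq_n : m != n.

(* For m = n the transpose would be an isometry fixing [origin] but not [corner10]. *)
Lemma isometry_fix_corner {f : V -> V} :
  grid_isometry f -> f origin = origin -> f corner10 = corner10.
Proof.
move=> iso_f f0; have := iso_f origin corner10.
have [h /= fc] :=
  isometry_origin_corner (grid_isometry_comp iso_f (grid_isometry_flip (true, false))).
rewrite f0 {}fc !grid_dist_origin_flip /=.
by case: h => [[] []] //=; move: m_neq_n => /eqP; lia.
Qed.

Lemma isometry_fix_origin {f : V -> V} :
  grid_isometry f -> f origin = origin -> forall x, f x = x.
Proof.
move=> iso_f f0 x; apply: grid_eq_dist; first by rewrite -{1}f0 iso_f.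
by rewrite -{1}(isometry_fix_corner iso_f f0) iso_f.
Qed.

Lemma isometry_grid_flip {f : V -> V} : grid_isometry f -> exists h, forall x, f x = grid_flip h x.
Proof.
move=> iso_f; have [h fo] := isometry_origin_corner iso_f; exists h => x.
have iso_hf := grid_isometry_comp (grid_isometry_flip h) iso_f.
have fix_x : grid_flip h (f x) = x.
  by apply: (isometry_fix_origin iso_hf); rewrite /= fo grid_flipK.
by rewrite -[in RHS]fix_x grid_flipK.
Qed.

Lemma aut_grid_flip {s : {perm V}} : is_aut (@grid_adj m n) s -> exists h, s = flip_perm h.
Proof.
move=> aut_s; have [h sE] := isometry_grid_flip (fun x y => aut_grid_dist x y aut_s).
by exists h; apply/permP => x; rewrite flip_permE.
Qed.

End NonSquare.

End GridIsometries.

Lemma fold_half_lt {N} (i : 'I_N) : minn i (N - i.+1) < ceil2 N.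
Proof. by have := ltn_ord i; rewrite /ceil2; lia. Qed.

Definition fold_half {N} (i : 'I_N) : 'I_(ceil2 N) := Ordinal (fold_half_lt i).

Lemma unfold_half_lt {N} (j : 'I_(ceil2 N)) : j < N.
Proof. by have := ltn_ord j; rewrite /ceil2; lia. Qed.

Definition unfold_half {N} (j : 'I_(ceil2 N)) : 'I_N := Ordinal (unfold_half_lt j).

Lemma unfold_halfK N : cancel (@unfold_half N) fold_half.
Proof. by move=> j; apply: val_inj => /=; have := ltn_ord j; rewrite /ceil2; lia. Qed.

Lemma fold_half_rev {N} (i : 'I_N) : fold_half (rev_ord i) = fold_half i.
Proof. by apply: val_inj => /=; have := ltn_ord i; lia. Qed.

Lemma fold_half_eq {N} {i j : 'I_N} :
  fold_half i = fold_half j <-> exists b, j = rev_if b i.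
Proof.
split=> [/(congr1 val) /= eq_ij | [[] ->] //=]; last by rewrite fold_half_rev.
exists (i != j :> nat); have := ltn_ord i; have := ltn_ord j.
by case: eqP => /= ij *; apply: val_inj => /=; lia.
Qed.

Section GridIndex.
Context {m n : nat}.
Notation V := ('I_m * 'I_n)%type.

Lemma grid_index_lt (x : V) : x.1 * n + x.2 < m * n.
Proof.
case: x => [i j] /=; apply: (@leq_trans (i.+1 * n)).
  by rewrite mulSn addnC ltn_add2r.
by rewrite leq_mul2r ltn_ord orbT.
Qed.

Definition grid_index (x : V) : 'I_(m * n) := Ordinal (grid_index_lt x).

Lemma grid_index_inj : injective grid_index.
Proof.
move=> [i j] [i' j'] /(congr1 val) /= eq_ij.
have n_gt0 : 0 < n by apply: leq_ltn_trans (ltn_ord j).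
have := congr1 (divn^~ n) eq_ij; have := congr1 (modn^~ n) eq_ij.
rewrite !modnMDl !divnMDl // !modn_small ?divn_small //= !addn0 => jj' ii'.
by congr pair; apply: val_inj.
Qed.

Lemma grid_index_bij : bijective grid_index.
Proof. by apply: (inj_card_bij grid_index_inj); rewrite card_prod !card_ord. Qed.

Lemma grid_index_rev (x : V) : grid_index (grid_flip (true, true) x) = rev_ord (grid_index x).
Proof.
case: x => [i j]; apply: val_inj => /=.
have := ltn_ord i; have := ltn_ord j => lt_j lt_i.
have : i.+1 * n <= m * n by rewrite leq_mul2r lt_i orbT.
by rewrite mulnBl mulSn; lia.
Qed.

End GridIndex.

(* The fibres of [p] are the orbits, so the invariant colorings are exactly those
   factoring through [p]. *)
Lemma card_invariant_colorings (I V W : finType) (f : I -> V -> V) (p : V -> W)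
    (s : W -> V) k :
    cancel s p -> (forall x y, p x = p y <-> exists i, y = f i x) ->
  #|[set c : {ffun V -> 'I_k} | [forall i, forall x, c (f i x) == c x]]| = k ^ #|W|.
Proof.
move=> sK fibers.
have -> : [set c : {ffun V -> 'I_k} | [forall i, forall x, c (f i x) == c x]] =
          [set [ffun x => d (p x)] | d : {ffun W -> 'I_k}].
  apply/setP => c; rewrite inE; apply/forallP/imsetP => [c_inv | [d _ ->] i].
    exists [ffun w => c (s w)] => //; apply/ffunP => x; rewrite !ffunE.
    have [i ->] := (fibers x (s (p x))).1 (esym (sK (p x))).
    by rewrite (eqP (forallP (c_inv i) x)).
  apply/forallP => x; rewrite !ffunE.
  by rewrite -((fibers x (f i x)).2 (ex_intro _ i erefl)).
rewrite card_imset ?card_ffun ?card_ord //.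
move=> d1 d2 /ffunP d12; apply/ffunP => w.
by have := d12 (s w); rewrite !ffunE sK.
Qed.

Lemma cardsU3_meet {T : finType} {A B C I : {set T}} :
    A :&: B = I -> A :&: C = I -> B :&: C = I ->
  #|A :|: B :|: C| + 2 * #|I| = #|A| + #|B| + #|C|.
Proof.
move=> AB_I AC_I BC_I; have := cardsUI (A :|: B) C.
rewrite setIUl AC_I BC_I setUid; have := cardsUI A B; rewrite AB_I; lia.
Qed.

Lemma card_classes (T : finType) (D : {set T}) (cl : T -> {set T}) r :
    {in D, forall x, cl x \subset D} ->
    {in D &, forall x y, (y \in cl x) = (cl y == cl x)} ->
    {in D, forall x, #|cl x| = r} ->
  #|[set cl x | x in D]| * r = #|D|.
Proof.
move=> clD cl_eq card_cl.
rewrite -sum_nat_const -sum1_card (partition_big_imset cl).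
apply: eq_bigr => _ /imsetP[x Dx ->]; rewrite sum1_card -(card_cl x Dx).
apply: eq_card => y; rewrite [RHS]unfold_in /=.
apply/idP/andP => [x_y | [Dy /eqP<-]]; last by rewrite cl_eq.
have Dy := subsetP (clD x Dx) y x_y.
by split; rewrite // -cl_eq.
Qed.

Section GridColorings.
Context {m n : nat} (k : nat).
Hypotheses (m_gt1 : 1 < m) (n_gt1 : 1 < n) (m_neq_n : m != n).
Notation V := ('I_m * 'I_n)%type.
Notation e := (@grid_adj m n).
Notation col := (coloring V k).

Definition flip_invariant h : {set col} :=
  [set c : col | [forall x, c (grid_flip h x) == c x]].

Definition all_flip_invariant : {set col} :=
  [set c : col | [forall h, forall x, c (grid_flip h x) == c x]].

Definition recolor (c : col) h : col := [ffun x => c (grid_flip h x)].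

Lemma distinguishing_flipE (c : col) :
  distinguishing e c = [forall h, (c \in flip_invariant h) ==> (h == 0%R)].
Proof.
apply/forallP/forallP => [dist_c h | flip_c s]; apply/implyP.
  rewrite inE => /forallP c_inv.
  have c_fix : [forall x, c (flip_perm h x) == c x].
    by apply/forallP => x; rewrite flip_permE c_inv.
  have := dist_c (flip_perm h); rewrite is_aut_flip c_fix /= => /eqP h_1.
  by apply/eqP/(grid_flip_id m_gt1 n_gt1) => x; rewrite -flip_permE h_1 perm1.
case/andP=> aut_s /forallP s_c; have [h sE] := aut_grid_flip m_gt1 n_gt1 m_neq_n aut_s.
have c_inv : c \in flip_invariant h.
  by rewrite inE; apply/forallP => x; rewrite -flip_permE -sE s_c.
have := flip_c h; rewrite c_inv /= => /eqP h0.
by rewrite sE h0; apply/eqP/permP => x; rewrite flip_permE grid_flip0 perm1.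
Qed.

Lemma distinguishing_setE :
  [set c : col | distinguishing e c] =
  ~: (flip_invariant (true, false) :|: flip_invariant (false, true)
      :|: flip_invariant (true, true)).
Proof.
apply/setP => c; rewrite in_setC !in_setU in_set distinguishing_flipE !negb_or.
apply/forallP/idP => [dist_c | /andP[/andP[c10 c01] c11] [[] []]].
  by have := dist_c (true, false); have := dist_c (false, true);
     have := dist_c (true, true); rewrite /= !implybF => -> -> ->.
all: by rewrite ?implybT //= ?(negbTE c10) ?(negbTE c01) ?(negbTE c11).
Qed.

Lemma recolorD (c : col) h h' : recolor (recolor c h) h' = recolor c (h + h')%R.
Proof. by apply/ffunP => x; rewrite !ffunE grid_flipD. Qed.

Lemma recolor0 (c : col) : recolor c 0%R = c.
Proof. by apply/ffunP => x; rewrite ffunE grid_flip0. Qed.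

Lemma flip_invariant_recolor (c : col) h h' :
  (recolor c h \in flip_invariant h') = (c \in flip_invariant h').
Proof.
rewrite !inE; apply/forallP/forallP => c_inv x.
  by have := c_inv (grid_flip h x); rewrite !ffunE grid_flipC !grid_flipK.
by rewrite !ffunE grid_flipC c_inv.
Qed.

Lemma distinguishing_recolor (c : col) h :
  distinguishing e (recolor c h) = distinguishing e c.
Proof.
by rewrite !distinguishing_flipE; apply: eq_forallb => h'; rewrite flip_invariant_recolor.
Qed.

Lemma recolor_inj (c : col) : distinguishing e c -> injective (recolor c).
Proof.
move=> dist_c h h' ch_ch'.
have c_inv : c \in flip_invariant (h + h')%R.
  rewrite inE; apply/forallP => x; rewrite grid_flipD.
  by move/ffunP/(_ (grid_flip h' x)): ch_ch'; rewrite !ffunE grid_flipK => ->.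
move: dist_c; rewrite distinguishing_flipE => /forallP/(_ (h + h')%R).
by rewrite c_inv; case: h h' {ch_ch' c_inv} => [[] []] [[] []].
Qed.

Lemma equiv_colE (c1 c2 : col) : equiv_col e c1 c2 = [exists h, c2 == recolor c1 h].
Proof.
apply/existsP/existsP => [[s /andP[aut_s /forallP c12]] | [h /eqP->]].
  have [h sE] := aut_grid_flip m_gt1 n_gt1 m_neq_n aut_s.
  exists h; apply/eqP/ffunP => x.
  by rewrite ffunE (eqP (c12 _)) sE flip_permE grid_flipK.
exists (flip_perm h); rewrite is_aut_flip.
by apply/forallP => x; rewrite flip_permE ffunE grid_flipK.
Qed.

Lemma equiv_class_recolor (c : col) h :
  [set c2 | equiv_col e (recolor c h) c2] = [set c2 | equiv_col e c c2].
Proof.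
apply/setP => c2; rewrite !inE !equiv_colE.
apply/existsP/existsP => [[h' /eqP->] | [h' /eqP->]].
  by exists (h + h')%R; rewrite recolorD.
by exists (- h + h')%R; rewrite recolorD addNKr.
Qed.

Lemma card_equiv_class (c : col) :
  distinguishing e c -> #|[set c2 | equiv_col e c c2]| = 4.
Proof.
move=> dist_c.
have -> : [set c2 | equiv_col e c c2] = [set recolor c h | h : klein].
  apply/setP => c2; rewrite inE equiv_colE.
  by apply/existsP/imsetP => [[h /eqP->] | [h _ ->]]; exists h.
by rewrite card_imset ?card_prod ?card_bool //; apply: recolor_inj.
Qed.

Lemma Phi_grid_mul4 : Phi e k * 4 = #|[set c : col | distinguishing e c]|.
Proof.
apply: card_classes => [c | c c2 _ _ | c].
- rewrite inE => dist_c; apply/subsetP => c2.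
  by rewrite !inE equiv_colE => /existsP[h /eqP->]; rewrite distinguishing_recolor.
- apply/idP/eqP => [| <-].
    by rewrite inE equiv_colE => /existsP[h /eqP->]; rewrite equiv_class_recolor.
  by rewrite inE equiv_colE; apply/existsP; exists 0%R; rewrite recolor0.
- by rewrite inE; apply: card_equiv_class.
Qed.

Lemma flip_invariantE h : flip_invariant h =
  [set c : col | [forall t : bool, forall x, c (grid_flip (if t then h else 0%R) x) == c x]].
Proof.
apply/setP => c; rewrite !inE; apply/idP/forallP => [c_inv [] // | c_inv].
  by apply/forallP => x; rewrite grid_flip0.
exact: c_inv true.
Qed.

Lemma flip_invariantI h h' : h != 0%R -> h' != 0%R -> h != h' ->
  flip_invariant h :&: flip_invariant h' = all_flip_invariant.
Proof.
move=> h_nz h'_nz hh'; apply/setP => c; rewrite !inE.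
apply/andP/forallP => [[/forallP c_h /forallP c_h'] g | c_all]; last by split; apply: c_all.
have c_hh' x : c (grid_flip (h + h')%R x) = c x.
  by rewrite grid_flipD (eqP (c_h _)) (eqP (c_h' _)).
have : [|| g == 0, g == h, g == h' | g == h + h']%R.
  by move: h_nz h'_nz hh'; clear; case: g h h' => [[] []] [[] []] [[] []].
by case/or4P => /eqP->; apply/forallP => x; rewrite ?grid_flip0 ?c_h ?c_h' ?c_hh'.
Qed.

Lemma card_flip_invariant_fst : #|flip_invariant (true, false)| = k ^ (n * ceil2 m).
Proof.
rewrite flip_invariantE (@card_invariant_colorings _ _ _
  (fun t => grid_flip (if t then (true, false) else 0%R))
  (fun x => (fold_half x.1, x.2)) (fun w => (unfold_half w.1, w.2))).
- by rewrite card_prod !card_ord mulnC.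
- by case=> w1 w2; rewrite /= unfold_halfK.
case=> [x1 x2] [y1 y2]; split=> /= [/pair_equal_spec[/fold_half_eq[t ->] <-] |].
  by exists t; case: t.
by case=> -[] /pair_equal_spec[-> ->] //=; rewrite fold_half_rev.
Qed.

Lemma card_flip_invariant_snd : #|flip_invariant (false, true)| = k ^ (m * ceil2 n).
Proof.
rewrite flip_invariantE (@card_invariant_colorings _ _ _
  (fun t => grid_flip (if t then (false, true) else 0%R))
  (fun x => (x.1, fold_half x.2)) (fun w => (w.1, unfold_half w.2))).
- by rewrite card_prod !card_ord.
- by case=> w1 w2; rewrite /= unfold_halfK.
case=> [x1 x2] [y1 y2]; split=> /= [/pair_equal_spec[<- /fold_half_eq[t ->]] |].
  by exists t; case: t.
by case=> -[] /pair_equal_spec[-> ->] //=; rewrite fold_half_rev.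
Qed.

Lemma card_flip_invariant_halfturn : #|flip_invariant (true, true)| = k ^ ceil2 (m * n).
Proof.
have [index_inv _ indexVK] := @grid_index_bij m n.
rewrite flip_invariantE (@card_invariant_colorings _ _ _
  (fun t => grid_flip (if t then (true, true) else 0%R))
  (fun x => fold_half (grid_index x)) (fun w => index_inv (unfold_half w))).
- by rewrite card_ord.
- by move=> w; rewrite indexVK unfold_halfK.
move=> x y; split=> [/fold_half_eq[t index_y] | [[] ->]].
- exists t; apply: grid_index_inj; rewrite {}index_y.
  by case: t; rewrite ?grid_index_rev ?grid_flip0.
- by rewrite grid_index_rev fold_half_rev.
- by rewrite grid_flip0.
Qed.

Lemma card_all_flip_invariant :
  #|all_flip_invariant| = k ^ (ceil2 m * ceil2 n).
Proof.
rewrite (@card_invariant_colorings _ _ _ grid_flip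
  (fun x => (fold_half x.1, fold_half x.2)) (fun w => (unfold_half w.1, unfold_half w.2))).
- by rewrite card_prod !card_ord.
- by case=> w1 w2; rewrite /= !unfold_halfK.
case=> [x1 x2] [y1 y2]; split=> /= [|[[a b] /pair_equal_spec[-> ->]]].
  by case/pair_equal_spec => /fold_half_eq[a ->] /fold_half_eq[b ->]; exists (a, b).
by case: a b => [] [] /=; rewrite ?fold_half_rev.
Qed.

Lemma Phi_grid_count :
  Phi e k * 4 + (k ^ (m * ceil2 n) + k ^ (n * ceil2 m) + k ^ ceil2 (m * n)) =
  k ^ (m * n) + 2 * k ^ (ceil2 m * ceil2 n).
Proof.
have := cardsC (flip_invariant (true, false) :|: flip_invariant (false, true)
                :|: flip_invariant (true, true)).
rewrite -distinguishing_setE -Phi_grid_mul4 card_ffun card_prod !card_ord.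
have := cardsU3_meet (@flip_invariantI (true, false) (false, true) isT isT isT)
  (@flip_invariantI (true, false) (true, true) isT isT isT)
  (@flip_invariantI (false, true) (true, true) isT isT isT).
rewrite card_flip_invariant_fst card_flip_invariant_snd card_flip_invariant_halfturn.
by rewrite card_all_flip_invariant; lia.
Qed.

End GridColorings.

Local Open Scope ring_scope.

Theorem theorem5p1 (m n k : nat) :
  (2 <= m)%N -> (2 <= n)%N -> m != n -> (2 <= k)%N ->
  ((Phi (@grid_adj m n) k)%:R : rat) =
    4%:R^-1 * ((k ^ (m * n))%:R - (k ^ (m * ceil2 n))%:R
               - (k ^ (n * ceil2 m))%:R - (k ^ ceil2 (m * n))%:R
               + 2%:R * (k ^ (ceil2 m * ceil2 n))%:R).
Proof.
move=> m_gt1 n_gt1 m_neq_n _.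
have /(congr1 (fun x => x%:R : rat)) := Phi_grid_count k m_gt1 n_gt1 m_neq_n.
by rewrite !natrD !natrM; lra.
Qed.
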